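(* The element $\Omega = qABC+q^2A^2+q^{-2}B^2+q^2C^2-qA\alpha-q^{-1}B\beta-qC\gamma$ of $\Delta$ is fixed by every element of ${\rm PSL}_2(\mathbb Z)$ under the action in which $\rho$ sends $A\mapsto B$, $B\mapsto C$, $C\mapsto A$, $\alpha\mapsto\beta$, $\beta\mapsto\gamma$, $\gamma\mapsto\alpha$ and $\sigma$ sends $A\mapsto B$, $B\mapsto A$, $C\mapsto C+\frac{AB-BA}{q-q^{-1}}$, $\alpha\mapsto\beta$, $\beta\mapsto\alpha$, $\gamma\mapsto\gamma$.
   Context: Let $\mathbb F$ be a field and fix a nonzero $q\in\mathbb F$ with $q^4\neq 1$. The universal Askey--Wilson algebra $\Delta$ is the associative $\mathbb F$-algebra with 1 with generators $A,B,C$ subject to the relations that each of $A+\frac{qBC-q^{-1}CB}{q^2-q^{-2}}$, $B+\frac{qCA-q^{-1}AC}{q^2-q^{-2}}$, $C+\frac{qAB-q^{-1}BA}{q^2-q^{-2}}$ is central; $\alpha,\beta,\gamma$ denote these three central elements (in order) each multiplied by $q+q^{-1}$. ${\rm PSL}_2(\mathbb Z)$ is presented by generators $\rho,\sigma$ with relations $\rho^3=\sigma^2=1$, and the stated assignments define an action of ${\rm PSL}_2(\mathbb Z)$ on $\Delta$ by automorphisms. *)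

From mathcomp Require Import all_boot all_order all_algebra.
Set Implicit Arguments. Unset Strict Implicit. Unset Printing Implicit Defensive.
Import GRing.Theory.
Local Open Scope ring_scope.

Definition aw_alpha (F : fieldType) (R : algType F) (q : F) (A B C : R) : R :=
  (q + q^-1) *: (A + (q ^+ 2 - q ^- 2)^-1 *: (q *: (B * C) - q^-1 *: (C * B))).

Definition aw_beta (F : fieldType) (R : algType F) (q : F) (A B C : R) : R :=
  aw_alpha q B C A.

Definition aw_gamma (F : fieldType) (R : algType F) (q : F) (A B C : R) : R :=
  aw_alpha q C A B.

(* A, B, C satisfy the defining relations of the universal Askey--Wilson
   algebra: the three elements A + (qBC-q^-1CB)/(q^2-q^-2), ... are central. *)
Definition aw_relations (F : fieldType) (R : algType F) (q : F) (A B C : R) : Prop :=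
  [/\ forall x : R, GRing.comm x (A + (q ^+ 2 - q ^- 2)^-1 *: (q *: (B * C) - q^-1 *: (C * B))),
      forall x : R, GRing.comm x (B + (q ^+ 2 - q ^- 2)^-1 *: (q *: (C * A) - q^-1 *: (A * C)))
    & forall x : R, GRing.comm x (C + (q ^+ 2 - q ^- 2)^-1 *: (q *: (A * B) - q^-1 *: (B * A)))].

Definition Omega_expr (F : fieldType) (R : algType F) (q : F) (A B C a b c : R) : R :=
  q *: (A * B * C) + q ^+ 2 *: (A ^+ 2) + q ^- 2 *: (B ^+ 2) + q ^+ 2 *: (C ^+ 2)
  - q *: (A * a) - q^-1 *: (B * b) - q *: (C * c).

Definition aw_Omega (F : fieldType) (R : algType F) (q : F) (A B C : R) : R :=
  Omega_expr q A B C (aw_alpha q A B C) (aw_beta q A B C) (aw_gamma q A B C).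

(* Each defining relation of Delta lets a product of two generators be reordered at the cost
   of terms of lower degree in A, B, C involving the central elements.  Moving A to the front
   of BCA (two reorderings) shows that rho(Omega) - Omega vanishes.  For sigma, the relation
   between A and B expresses BA through sigma(C), which collapses sigma(Omega) to
   -C sigma(C) plus quadratic terms; expanding sigma(C) leaves CAB, and moving C to the back
   gives Omega. *)

From mathcomp Require Import all_boot all_order all_algebra.
From mathcomp Require Import ring.
Import GRing.Theory.
Set Implicit Arguments. Unset Strict Implicit. Unset Printing Implicit Defensive.
Local Open Scope ring_scope.

Section LinearCombination.
Variables (F : fieldType) (V : lmodType F).

Definition lincomb (v : seq V) (c : nat -> F) : V := \sum_(i < size v) c i *: v`_i.

Definition delta (k i : nat) : F := (i == k)%:R.

Lemma lincomb_delta v k : (k < size v)%N -> v`_k = lincomb v (delta k).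
Proof.
move=> lt_kv; rewrite /lincomb (bigD1 (Ordinal lt_kv)) //= /delta eqxx scale1r.
rewrite big1 ?addr0 // => i /eqP neq_ik; case: eqP => [eq_ik|]; last by rewrite scale0r.
by case: neq_ik; apply: val_inj.
Qed.

Lemma scale_lincomb v a c : a *: lincomb v c = lincomb v (fun i => a * c i).
Proof. by rewrite /lincomb scaler_sumr; apply: eq_bigr => i _; rewrite scalerA. Qed.

Lemma opp_lincomb v c : - lincomb v c = lincomb v (fun i => - c i).
Proof. by rewrite /lincomb -sumrN; apply: eq_bigr => i _; rewrite scaleNr. Qed.

Lemma add_lincomb v c d : lincomb v c + lincomb v d = lincomb v (fun i => c i + d i).
Proof. by rewrite /lincomb -big_split; apply: eq_bigr => i _; rewrite scalerDl. Qed.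

Lemma eq_lincomb v c d :
  (forall i, (i < size v)%N -> c i = d i) -> lincomb v c = lincomb v d.
Proof. by move=> eq_cd; apply: eq_bigr => i _; rewrite eq_cd. Qed.

End LinearCombination.
Arguments delta {F}.

Lemma forall_ltn0 (P : nat -> Prop) i : (i < 0)%N -> P i.
Proof. by []. Qed.

Lemma forall_ltnS n (P : nat -> Prop) :
  P 0%N -> (forall i, (i < n)%N -> P i.+1) -> forall i, (i < n.+1)%N -> P i.
Proof. by move=> P0 PS [|i] //; apply: PS. Qed.

(* Identities in a noncommutative algebra are checked by expanding both sides, reading every
   monomial as a coordinate vector over a given list of monomials, and comparing the scalar
   coefficients with [field]. *)
Ltac expand_alg :=
  rewrite ?expr2; repeat progress rewrite ?mulrDr ?mulrDl ?mulrBr ?mulrBl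
    -?scalerAl -?scalerAr ?mulrA ?scalerA ?scalerDr ?scalerBr ?mulNr ?mulrN ?scalerN.

Ltac in_basis v :=
  (* the list is hidden behind a local definition: it contains the monomials being rewritten *)
  let b := fresh "basis" in
  pose b := v;
  let rec go l k := lazymatch l with
    | ?m :: ?l' => let e := fresh in
        have e : m = lincomb b (delta k) := lincomb_delta (v := b) (k := k) isT;
        rewrite ?e; clear e; go l' constr:(k.+1)
    | [::] => idtac end in
  go v 0%N.

Ltac module_eq v :=
  expand_alg; in_basis v;
  repeat (rewrite scale_lincomb || rewrite opp_lincomb || rewrite add_lincomb);
  apply: eq_lincomb;
  (* [field] states its side conditions as [q != 0] and [q * q - 1 != 0] *)
  repeat (apply: forall_ltnS; first by rewrite /delta /=; field;
    do ?[apply/andP; split]; rewrite -?expr2 ?subr_eq0);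
  exact: forall_ltn0.

Lemma qrel_solve_r (F : fieldType) (V : lmodType F) (q : F) (u v w : V) :
  q != 0 -> q *: u - q^-1 *: v = w -> v = q ^+ 2 *: u - q *: w.
Proof. by move=> q_neq0 <-; module_eq [:: u; v]. Qed.

Lemma qrel_solve_l (F : fieldType) (V : lmodType F) (q : F) (u v w : V) :
  q != 0 -> q *: u - q^-1 *: v = w -> u = q ^- 2 *: v + q^-1 *: w.
Proof. by move=> q_neq0 <-; module_eq [:: u; v]. Qed.

Definition aw_center (F : fieldType) (R : algType F) (q : F) (A B C : R) : R :=
  A + (q ^+ 2 - q ^- 2)^-1 *: (q *: (B * C) - q^-1 *: (C * B)).

Lemma aw_centerP (F : fieldType) (R : algType F) (q : F) (A B C : R) :
  q ^+ 2 - q ^- 2 != 0 ->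
  q *: (B * C) - q^-1 *: (C * B) = (q ^+ 2 - q ^- 2) *: (aw_center q A B C - A).
Proof. by move=> s_neq0; rewrite /aw_center [A + _]addrC addrK scalerA mulfV ?scale1r. Qed.

Lemma aw_denom_neq0 (F : fieldType) (q : F) :
  q != 0 -> q ^+ 4 != 1 -> q ^+ 2 - q ^- 2 != 0.
Proof.
move=> q_neq0; apply: contraNneq => /eqP; rewrite subr_eq0 => /eqP q2E.
by rewrite -[4%N]/(2 + 2)%N exprD {1}q2E mulVf // expf_neq0.
Qed.

Section AskeyWilson.
Variables (F : fieldType) (R : algType F) (q : F) (A B C X Y Z : R).
Hypothesis q_neq0 : q != 0.
Let s := q ^+ 2 - q ^- 2.
Hypotheses (relBC : q *: (B * C) - q^-1 *: (C * B) = s *: (X - A))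
           (relCA : q *: (C * A) - q^-1 *: (A * C) = s *: (Y - B))
           (relAB : q *: (A * B) - q^-1 *: (B * A) = s *: (Z - C)).
Hypotheses (Y_central : forall x, GRing.comm x Y) (Z_central : forall x, GRing.comm x Z).

Lemma aw_CB : C * B = q ^+ 2 *: (B * C) - q *: (s *: (X - A)).
Proof. exact: qrel_solve_r. Qed.

Lemma aw_CA : C * A = q ^- 2 *: (A * C) + q^-1 *: (s *: (Y - B)).
Proof. exact: qrel_solve_l. Qed.

Lemma aw_AB : A * B = q ^- 2 *: (B * A) + q^-1 *: (s *: (Z - C)).
Proof. exact: qrel_solve_l. Qed.

Lemma aw_BA : B * A = q ^+ 2 *: (A * B) - q *: (s *: (Z - C)).
Proof. exact: qrel_solve_r. Qed.

Lemma aw_BCA : B * C * A = A * B * C + (q^-1 * s) *: (C * C - B * B + B * Y - C * Z).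
Proof.
rewrite -mulrA aw_CA; expand_alg; rewrite aw_BA; expand_alg; rewrite -(Z_central C).
module_eq [:: A * B * C; C * C; B * B; B * Y; C * Z].
Qed.

Lemma aw_CAB : C * A * B = A * B * C + (q^-1 * s) *: (A * A - B * B - A * X + B * Y).
Proof.
rewrite aw_CA; expand_alg; rewrite -(mulrA A C B) aw_CB; expand_alg; rewrite -(Y_central B).
module_eq [:: A * B * C; A * A; B * B; A * X; B * Y].
Qed.

Lemma Omega_rho :
  Omega_expr q B C A ((q + q^-1) *: Y) ((q + q^-1) *: Z) ((q + q^-1) *: X)
  = Omega_expr q A B C ((q + q^-1) *: X) ((q + q^-1) *: Y) ((q + q^-1) *: Z).
Proof.
rewrite /Omega_expr aw_BCA.
module_eq [:: A * B * C; A * A; B * B; C * C; A * X; B * Y; C * Z].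
Qed.

Hypothesis q2_neq1 : q ^+ 2 != 1.

(* sigma(C) is named [C'] and kept abstract, so that expanding products does not unfold it. *)
Lemma sigmaC_BA C' : C' = C + (q - q^-1)^-1 *: (A * B - B * A) ->
  B * A = - q *: C' + (q + q^-1) *: Z - q^-1 *: C.
Proof. by move->; rewrite aw_AB; module_eq [:: B * A; Z; C]. Qed.

Lemma sigmaCE C' : C' = C + (q - q^-1)^-1 *: (A * B - B * A) ->
  C' = - q *: (A * B) + (q ^+ 2 + 1) *: Z - q ^+ 2 *: C.
Proof. by move->; rewrite aw_BA; module_eq [:: A * B; Z; C]. Qed.

Lemma Omega_sigma_reduced C' : C' = C + (q - q^-1)^-1 *: (A * B - B * A) ->
  Omega_expr q B A C' ((q + q^-1) *: Y) ((q + q^-1) *: X) ((q + q^-1) *: Z)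
  = - (C * C') + q ^+ 2 *: (B * B) + q ^- 2 *: (A * A)
    - (q ^+ 2 + 1) *: (B * Y) - (1 + q ^- 2) *: (A * X).
Proof.
move=> C'E; rewrite /Omega_expr (sigmaC_BA C'E); expand_alg; rewrite -(Z_central C').
module_eq [:: C' * C'; C' * Z; C * C'; B * B; A * A; B * Y; A * X].
Qed.

Lemma Omega_sigma :
  Omega_expr q B A (C + (q - q^-1)^-1 *: (A * B - B * A))
    ((q + q^-1) *: Y) ((q + q^-1) *: X) ((q + q^-1) *: Z)
  = Omega_expr q A B C ((q + q^-1) *: X) ((q + q^-1) *: Y) ((q + q^-1) *: Z).
Proof.
rewrite (Omega_sigma_reduced erefl) (sigmaCE erefl) /Omega_expr; expand_alg.
rewrite aw_CAB.
module_eq [:: A * B * C; A * A; B * B; C * C; A * X; B * Y; C * Z].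
Qed.

End AskeyWilson.

Theorem theorem6p4 (F : fieldType) (q : F) (R : algType F) (A B C : R) :
  q != 0 -> q ^+ 4 != 1 -> aw_relations q A B C ->
  let alpha := aw_alpha q A B C in
  let beta := aw_beta q A B C in
  let gamma := aw_gamma q A B C in
  Omega_expr q B C A beta gamma alpha = aw_Omega q A B C /\
  Omega_expr q B A (C + (q - q^-1)^-1 *: (A * B - B * A)) beta alpha gamma
    = aw_Omega q A B C.
Proof.
move=> q_neq0 q4_neq1 [_ Y_central Z_central] alpha beta gamma.
have s_neq0 := aw_denom_neq0 q_neq0 q4_neq1.
have q2_neq1 : q ^+ 2 != 1.
  by apply: contraNneq q4_neq1 => q2E; rewrite -[4%N]/(2 * 2)%N exprM q2E expr1n.
have rel (u v w : R) := aw_centerP u v w s_neq0.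
split.
  exact: (Omega_rho _ q_neq0 (rel B C A) (rel C A B) Z_central).
exact: (Omega_sigma q_neq0 (rel A B C) (rel B C A) (rel C A B) Y_central Z_central q2_neq1).
Qed.
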